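(* For all positive integers $m,n,w,d$ with $n\ge 2$, $w\le m$ and $d\ge w+1$, we have $A(m,n,w,d)\le A(m,n-1,w,d-w)$.
   Context: $J(m,w)$ denotes the set of binary vectors of length $m$ and Hamming weight $w$. Elements of $J(m,w)^n$ are identified with $m\times n$ binary matrices all of whose columns have weight $w$, with distance the binary Hamming distance (number of differing entries). $A(m,n,w,d)$ denotes the maximum cardinality of a nonempty subset of $J(m,w)^n$ in which any two distinct elements are at Hamming distance at least $2d$. *)

From mathcomp Require Import all_boot.
Set Implicit Arguments. Unset Strict Implicit. Unset Printing Implicit Defensive.

(* An element of J(m,w)^n is an m x n binary matrix; we represent it as a
   function from the n column indices to columns, each column a function
   'I_m -> bool. *)
Notation col m := {ffun 'I_m -> bool}.
Notation word m n := {ffun 'I_n -> col m}.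

Definition weight (m : nat) (c : col m) : nat := #|[set i | c i]|.

Definition in_J (m n w : nat) (x : word m n) : bool :=
  [forall j, weight (x j) == w].

Definition hdist (m n : nat) (x y : word m n) : nat :=
  \sum_(j < n) #|[set i | x j i != y j i]|.

Definition is_code (m n w d : nat) (C : {set word m n}) : bool :=
  [&& C != set0,
      [forall x in C, in_J w x] &
      [forall x in C, forall y in C, (x != y) ==> (2 * d <= hdist x y)]].

(* A(m,n,w,d): maximum cardinality of such a code (0 if none exists). *)
Definition A (m n w d : nat) : nat :=
  \max_(C : {set word m n} | is_code w d C) #|C|.

From mathcomp Require Import all_boot.
From mathcomp Require Import zify.
Set Implicit Arguments. Unset Strict Implicit.

(* Deleting the last column of the words of a code of minimum distance 2d in
   J(m,w)^(n+1) loses at most 2w in every distance, because two columns of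
   weight w differ in at most 2w entries.  Since d > w, distinct codewords keep
   distinct images, so the punctured code is a code of the same size in
   J(m,w)^n with minimum distance at least 2(d - w). *)

Definition drop_last_col (m n : nat) (x : word m n.+1) : word m n :=
  [ffun j => x (widen_ord (leqnSn n) j)].

Lemma hdistxx (m n : nat) (x : word m n) : hdist x x = 0.
Proof.
rewrite /hdist big1 // => j _; apply/eqP; rewrite cards_eq0.
by apply/eqP/setP => i; rewrite !inE eqxx.
Qed.

Lemma card_col_neq_le (m : nat) (a b : col m) :
  #|[set i | a i != b i]| <= weight a + weight b.
Proof.
rewrite /weight -[X in _ <= X](cardsUI [set i | a i]).
apply: leq_trans (leq_addr _ _).
apply: subset_leq_card; apply/subsetP => i.
by rewrite !inE; case: (a i) (b i) => -[].
Qed.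

Section DropLastCol.

Variables m n w : nat.
Implicit Types x y : word m n.+1.

Lemma hdist_drop_last_col x y :
  hdist x y = hdist (drop_last_col x) (drop_last_col y)
              + #|[set i | x ord_max i != y ord_max i]|.
Proof.
rewrite /hdist big_ord_recr /=; congr (_ + _).
by apply: eq_bigr => j _; rewrite !ffunE.
Qed.

Lemma in_J_drop_last_col x : in_J w x -> in_J w (drop_last_col x).
Proof. by move=> /forallP Jx; apply/forallP => j; rewrite ffunE. Qed.

Lemma hdist_drop_last_col_ge x y (d : nat) :
  in_J w x -> in_J w y -> 2 * d <= hdist x y ->
  2 * (d - w) <= hdist (drop_last_col x) (drop_last_col y).
Proof.
move=> /forallP Jx /forallP Jy; rewrite hdist_drop_last_col.
have := card_col_neq_le (x ord_max) (y ord_max).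
rewrite (eqP (Jx _)) (eqP (Jy _)); lia.
Qed.

End DropLastCol.

Section PuncturedCode.

Variables m n w d : nat.
Variable C : {set word m n.+1}.
Hypotheses (w_lt_d : w < d) (codeC : is_code w d C).

Lemma drop_last_col_in_code_inj : {in C &, injective (@drop_last_col m n)}.
Proof.
case/and3P: codeC => _ /forall_inP JC /forall_inP distC x y xC yC eq_xy.
apply: contraTeq (forall_inP (distC x xC) y yC) => neq_xy.
rewrite neq_xy /= -ltnNge.
have := hdist_drop_last_col_ge (JC x xC) (JC y yC) (d := d).
by rewrite eq_xy hdistxx; lia.
Qed.

Lemma is_code_drop_last_col : is_code w (d - w) (@drop_last_col m n @: C).
Proof.
case/and3P: codeC => C_neq0 /forall_inP JC /forall_inP distC.
apply/and3P; split; first by rewrite imset_eq0.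
  by apply/forall_inP => _ /imsetP [x xC ->]; exact/in_J_drop_last_col/JC.
apply/forall_inP => _ /imsetP [x xC ->].
apply/forall_inP => _ /imsetP [y yC ->].
apply/implyP => neq_xy.
apply: hdist_drop_last_col_ge; [exact: JC | exact: JC |].
apply: (implyP (forall_inP (distC x xC) y yC)).
by apply: contraNneq neq_xy => ->.
Qed.

End PuncturedCode.

Theorem proposition2 (m n w d : nat) :
  0 < m -> 0 < n -> 0 < w -> 0 < d ->
  2 <= n -> w <= m -> w + 1 <= d ->
  A m n w d <= A m n.-1 w (d - w).
Proof.
move=> _ _ _ _ n_ge2 _; rewrite addn1 => w_lt_d.
case: n n_ge2 => [//|n] _ /=.
apply/bigmax_leqP => C codeC.
rewrite -(card_in_imset (drop_last_col_in_code_inj w_lt_d codeC)).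
exact/leq_bigmax_cond/is_code_drop_last_col.
Qed.
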